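(* Let $p,q\ge1$, $n=p+q$. For every $s\in\mathfrak{S}_{p,q}$, $\widetilde\alpha(Q_{p,q}(s))=T_s$ and $\widetilde\beta(T_s)=s$.
   Context: $\mathfrak{S}_n$ is generated by $s_i=(i,i+1)$; products are composed so that $(\sigma\tau)(x)=\tau(\sigma(x))$. $\mathfrak{S}_{p,q}$ is the set of $\sigma\in\mathfrak{S}_{p+q}$ with $\sigma^{-1}(1)<\cdots<\sigma^{-1}(p)$ and $\sigma^{-1}(p+1)<\cdots<\sigma^{-1}(p+q)$. Bubble decomposition: every $\sigma\in\mathfrak{S}_n$ factors uniquely as $\sigma=\sigma^{(n-1)}\cdots\sigma^{(1)}$ with $\sigma^{(k)}\in\{e,s_k,s_{k-1}s_k,\dots,s_1\cdots s_k\}$; $t_k(\sigma)=t$ if $\sigma^{(k)}=s_t\cdots s_k$, $t_k(\sigma)=0$ if $\sigma^{(k)}=e$, and $t_n(\sigma)=0$. $\operatorname{GVB}_n^+$ is the monoid generated by $\sigma_1,\dots,\sigma_{n-1},\xi_1,\dots,\xi_{n-1}$ subject to: for $|i-j|>1$, $\sigma_i\sigma_j=\sigma_j\sigma_i$, $\sigma_i\xi_j=\xi_j\sigma_i$, $\xi_i\xi_j=\xi_j\xi_i$; for $1\le i\le n-2$, $\sigma_i\sigma_{i+1}\sigma_i=\sigma_{i+1}\sigma_i\sigma_{i+1}$, $\xi_i\xi_{i+1}\xi_i=\xi_{i+1}\xi_i\xi_{i+1}$, $\xi_i\sigma_{i+1}\sigma_i=\sigma_{i+1}\sigma_i\xi_{i+1}$,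 $\xi_{i+1}\sigma_i\sigma_{i+1}=\sigma_i\sigma_{i+1}\xi_i$. $\mathfrak{B}_n^+$ is the positive braid monoid on $\sigma_1,\dots,\sigma_{n-1}$. $\widetilde\alpha:\mathbb{K}[\operatorname{GVB}_n^+]\to\mathbb{K}[\mathfrak{B}_n^+]$ is the algebra quotient by the ideal generated by all $\xi_i$ ($\sigma_i\mapsto\sigma_i$, $\xi_i\mapsto0$), and $\widetilde\beta:\mathbb{K}[\mathfrak{B}_n^+]\to\mathbb{K}[\mathfrak{S}_n]$ is the quotient by the ideal generated by all $\sigma_i^2-1$ ($\sigma_i\mapsto s_i$). Matsumoto–Tits section: for $s\in\mathfrak{S}_n$ with reduced expression $s=s_{i_1}\cdots s_{i_l}$, $T_s=\sigma_{i_1}\cdots\sigma_{i_l}\in\mathfrak{B}_n^+$ (independent of the reduced expression). For $s\in\mathfrak{S}_{p,q}$ with $t_k=t_k(s)$, $$Q_{p,q}(s)=\prod_{k=n-1,\dots,1;\ s^{(k)}\neq e}\big(\sigma_{t_k}+(1-\delta_{t_k+1,t_{k+1}})\sigma_1\cdots\sigma_{t_k-1}\xi_{t_k}\big)\sigma_{t_k+1}\cdots\sigma_k\in\mathbb{K}[\operatorname{GVB}_n^+],$$ factors ordered with $k$ decreasing from left to right, $\delta$ the Kronecker delta, empty products equal to $e$. *)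

From HB Require Import structures.
From mathcomp Require Import all_boot all_order all_algebra all_fingroup.
From mathcomp Require Import boolp.
Set Implicit Arguments. Unset Strict Implicit. Unset Printing Implicit Defensive.
Import GRing.Theory.

Inductive cong {A : Type} (R : seq A -> seq A -> Prop) : seq A -> seq A -> Prop :=
| cong_step l u v r : R u v -> cong R (l ++ u ++ r) (l ++ v ++ r)
| cong_refl u : cong R u u
| cong_sym u v : cong R u v -> cong R v u
| cong_trans u v w : cong R u v -> cong R v w -> cong R u w.

(* A formal K-linear combination of words; it represents an element of the
   monoid algebra K[<A | R>] via the projection words -> monoid. *)
Definition malg_coeff (K : fieldType) (A : Type) (R : seq A -> seq A -> Prop)
  (a : seq (K * seq A)) (w : seq A) : K :=
  (\sum_(x <- a) (if `[< cong R x.2 w >] then x.1 else 0))%R.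

Definition malg_eq (K : fieldType) (A : Type) (R : seq A -> seq A -> Prop)
  (a b : seq (K * seq A)) : Prop :=
  forall w, malg_coeff R a w = malg_coeff R b w.

Definition lc_mul (K : fieldType) (A : Type) (a b : seq (K * seq A)) :
  seq (K * seq A) := [seq ((x.1 * y.1)%R, x.2 ++ y.2) | x <- a, y <- b].
Definition lc_one (K : fieldType) (A : Type) : seq (K * seq A) := [:: (1%R, [::])].

Definition braid_rel (n : nat) (u v : seq nat) : Prop :=
  (exists i j, [/\ 0 < i < n, 0 < j < n, (i.+1 < j) || (j.+1 < i),
                  u = [:: i; j] & v = [:: j; i]])
  \/ (exists i, [/\ 0 < i, i.+1 < n, u = [:: i; i.+1; i] & v = [:: i.+1; i; i.+1]]).

Inductive gvb_letter := Sig of nat | Xi of nat.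

Definition gvb_rel (n : nat) (u v : seq gvb_letter) : Prop :=
  (exists i j, [/\ 0 < i < n, 0 < j < n, (i.+1 < j) || (j.+1 < i) &
     [\/ u = [:: Sig i; Sig j] /\ v = [:: Sig j; Sig i],
         u = [:: Sig i; Xi j] /\ v = [:: Xi j; Sig i] |
         u = [:: Xi i; Xi j] /\ v = [:: Xi j; Xi i]]])
  \/ (exists i, [/\ 0 < i, i.+1 < n &
     [\/ u = [:: Sig i; Sig i.+1; Sig i] /\ v = [:: Sig i.+1; Sig i; Sig i.+1],
         u = [:: Xi i; Xi i.+1; Xi i] /\ v = [:: Xi i.+1; Xi i; Xi i.+1],
         u = [:: Xi i; Sig i.+1; Sig i] /\ v = [:: Sig i.+1; Sig i; Xi i.+1] |
         u = [:: Xi i.+1; Sig i; Sig i.+1] /\ v = [:: Sig i; Sig i.+1; Xi i]]]).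

(* alpha~ : K[GVB_n^+] -> K[B_n^+], sigma_i |-> sigma_i, xi_i |-> 0,
   computed on representatives *)
Definition is_sig (x : gvb_letter) : bool := if x is Sig _ then true else false.
Definition unsig (x : gvb_letter) : nat := match x with Sig i => i | Xi i => i end.
Definition alpha_t (K : fieldType) (a : seq (K * seq gvb_letter)) : seq (K * seq nat) :=
  [seq (x.1, map unsig x.2) | x <- a & all is_sig x.2].

(* ---------- Symmetric group (mathcomp: (s * t) x = t (s x)) ---------- *)
(* s_i = (i, i+1) in 1-based notation, i.e. tperm (i-1) i on 'I_n *)
Definition sgen (n i : nat) : 'S_n :=
  match n return 'S_n with
  | 0 => 1%g
  | m.+1 => tperm (inord i.-1 : 'I_m.+1) (inord i)
  end.
Definition perm_of_word (n : nat) (w : seq nat) : 'S_n := (\prod_(i <- w) sgen n i)%g.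

Definition gen_word (n : nat) (w : seq nat) : bool := all (fun i => 0 < i < n) w.

Definition reduced_word (n : nat) (s : 'S_n) (w : seq nat) : Prop :=
  [/\ gen_word n w, perm_of_word n w = s &
      forall w', gen_word n w' -> perm_of_word n w' = s -> size w <= size w'].

(* beta~ : K[B_n^+] -> K[S_n] (group algebra as functions 'S_n -> K),
   sigma_i |-> s_i, computed on representatives *)
Definition beta_t (K : fieldType) (n : nat) (b : seq (K * seq nat)) : {ffun 'S_n -> K} :=
  [ffun g => (\sum_(x <- b | perm_of_word n x.2 == g) x.1)%R].

Definition group_elt (K : fieldType) (n : nat) (s : 'S_n) : {ffun 'S_n -> K} :=
  [ffun g => if g == s then 1%R else 0%R].

(* (p,q)-shuffles, 0-based indices *)
Definition shuffle (p q : nat) (s : 'S_(p + q)) : Prop :=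
  forall i j : 'I_(p + q), i < j -> (j < p) || (p <= i) -> (s^-1)%g i < (s^-1)%g j.

(* bubble decomposition s = s^(n-1) ... s^(1), s^(k) = s_t ... s_k (t = t k),
   or e if t k = 0; with the convention t n = 0 *)
Definition bubble_word (k t : nat) : seq nat := if t == 0 then [::] else iota t (k - t).+1.
Definition bubble_decomp (n : nat) (s : 'S_n) (t : nat -> nat) : Prop :=
  [/\ forall k, 0 < k < n -> t k <= k, t n = 0 &
      s = perm_of_word n (flatten [seq bubble_word k (t k) | k <- rev (iota 1 n.-1)])].

(* Q_{p,q}(s) as a formal combination of GVB words, given t k = t_k(s) *)
Definition Q_factor (K : fieldType) (t : nat -> nat) (k : nat) : seq (K * seq gvb_letter) :=
  let tk := t k in
  let tail := [seq Sig i | i <- iota tk.+1 (k - tk)] in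
  let c := if tk.+1 == t k.+1 then 0%R else 1%R in
  [:: (1%R, Sig tk :: tail); (c, [seq Sig i | i <- iota 1 tk.-1] ++ Xi tk :: tail)].

Definition Qpq (K : fieldType) (n : nat) (t : nat -> nat) : seq (K * seq gvb_letter) :=
  foldr (@lc_mul K _) (lc_one K _)
        [seq Q_factor K t k | k <- rev (iota 1 n.-1) & t k != 0].

From HB Require Import structures.
From mathcomp Require Import all_boot all_order all_algebra all_fingroup.
From mathcomp Require Import boolp zify.
Set Implicit Arguments. Unset Strict Implicit.
Import GRing.Theory.

(* Under alpha~ every summand of Q_{p,q}(s) that contains a xi vanishes, so
   alpha~(Q_{p,q}(s)) is the single word s^(n-1) ... s^(1) read off the bubble
   decomposition.  Counting inversions shows that this word is reduced: left
   multiplication by a cycle s_t ... s_k whose support lies below the letters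
   already used adds exactly k - t + 1 inversions.  Matsumoto's theorem (two
   reduced words of a permutation are braid-equivalent, by induction on the
   inversion number) identifies it with T_s, and beta~ sends every word of s
   to s because the braid relations hold in S_n. *)

(* Innermost conditionals first, so that each test becomes a plain equation for [lia]. *)
Ltac split_ifs :=
  repeat match goal with
  | |- context [if ?b then _ else _] =>
      lazymatch b with context [if _ then _ else _] => fail | _ =>
      let E := fresh "E" in destruct b eqn:E end
  end;
  repeat match goal with
  | H : (_ == _) = true |- _ => move/eqP: H => H
  | H : (_ == _) = false |- _ => move/eqP: H => H
  end.

Lemma eq_inord m (y : 'I_m.+1) k : k <= m -> (y == inord k) = (y == k :> nat).
Proof.
move=> Hk; apply/eqP/eqP => [->|<-]; first by rewrite inordK.
by rewrite inord_val.
Qed.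

Lemma sgenE n i (y : 'I_n) : i.+1 < n ->
  (sgen n i.+1 y : nat) =
    if y == i :> nat then i.+1 else if y == i.+1 :> nat then i else y.
Proof.
case: n y => [|m] y H; first by case: y.
rewrite /sgen permE /= !eq_inord //; try lia.
by case: eqP => _ /=; [rewrite inordK|case: eqP => _ /=; [rewrite inordK //; lia|]].
Qed.

Lemma sgen_id n i (c : 'I_n) : i.+1 < n -> c <> i :> nat -> c <> i.+1 :> nat ->
  sgen n i.+1 c = c.
Proof. by move=> H h1 h2; apply/val_inj; rewrite /= sgenE //; split_ifs; lia. Qed.

Lemma sgen_swap n i (a b : 'I_n) : i.+1 < n -> a = i :> nat -> b = i.+1 :> nat ->
  sgen n i.+1 a = b /\ sgen n i.+1 b = a.
Proof.
by move=> H Ha Hb; split; apply/val_inj; rewrite /= sgenE // Ha Hb; split_ifs; lia.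
Qed.

Lemma sgen2 n i : i.+1 < n -> (sgen n i.+1 * sgen n i.+1 = 1)%g.
Proof.
move=> H; apply/permP => y; apply/val_inj; rewrite /= permM perm1 !sgenE //.
by split_ifs; lia.
Qed.

Lemma sgen_comm n i j : i.+1 < n -> j.+1 < n -> (i.+1 < j) || (j.+1 < i) ->
  (sgen n i.+1 * sgen n j.+1 = sgen n j.+1 * sgen n i.+1)%g.
Proof.
move=> Hi Hj Hij; apply/permP => y; apply/val_inj; rewrite /= !permM !sgenE //.
by split_ifs; lia.
Qed.

Lemma sgen_braid n i : i.+2 < n ->
  (sgen n i.+1 * sgen n i.+2 * sgen n i.+1 = sgen n i.+2 * sgen n i.+1 * sgen n i.+2)%g.
Proof.
move=> Hi; apply/permP => y; apply/val_inj; rewrite /= !permM !sgenE //; try lia.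
by split_ifs; lia.
Qed.

Lemma sgen_mulE n i (x : 'S_n) (a b : 'I_n) :
  i.+1 < n -> a = i :> nat -> b = i.+1 :> nat ->
  [/\ (sgen n i.+1 * x)%g a = x b, (sgen n i.+1 * x)%g b = x a &
      forall c : 'I_n, c <> i :> nat -> c <> i.+1 :> nat -> (sgen n i.+1 * x)%g c = x c].
Proof.
move=> H Ha Hb; have [ta tb] := sgen_swap H Ha Hb.
by split; [rewrite permM ta|rewrite permM tb|move=> c h1 h2; rewrite permM sgen_id].
Qed.

Lemma perm_of_word_nil n : perm_of_word n [::] = 1%g.
Proof. by rewrite /perm_of_word big_nil. Qed.

Lemma perm_of_word_cons n a w :
  perm_of_word n (a :: w) = (sgen n a * perm_of_word n w)%g.
Proof. by rewrite /perm_of_word big_cons. Qed.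

Lemma perm_of_word_cat n w1 w2 :
  perm_of_word n (w1 ++ w2) = (perm_of_word n w1 * perm_of_word n w2)%g.
Proof. by rewrite /perm_of_word big_cat. Qed.

Definition inv_count {n} (x : 'S_n) : nat :=
  \sum_(pr : 'I_n * 'I_n) ((pr.1 < pr.2) && (x pr.2 < x pr.1)).

Lemma inv_count1 n : inv_count (1%g : 'S_n) = 0.
Proof. by apply: big1 => -[u v] _; rewrite !perm1 /=; case: ltngtP. Qed.

(* Reindexing the pairs by tau x tau changes the status of the pair {a, b} only. *)
Lemma inv_count_sgen_mul n i (x : 'S_n) (a b : 'I_n) :
  i.+1 < n -> a = i :> nat -> b = i.+1 :> nat ->
  inv_count (sgen n i.+1 * x)%g + (x b < x a) = inv_count x + (x a < x b).
Proof.
move=> H Ha Hb.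
have [ta tb] := sgen_swap H Ha Hb.
set tau := sgen n i.+1.
have tau2_inj : injective (fun pr : 'I_n * 'I_n => (tau pr.1, tau pr.2)).
  by move=> [u v] [u' v'] /= [/perm_inj -> /perm_inj ->].
rewrite /inv_count [in RHS](reindex_inj tau2_inj) /=.
have ab : (b, a) != (a, b) by apply/eqP => -[E _]; move: (congr1 val E) => /=; lia.
rewrite (bigD1 (a,b)) //= (bigD1 (b,a)) //= [in RHS](bigD1 (a,b)) //=.
rewrite [in RHS](bigD1 (b,a)) //= !permM ta tb /= Ha Hb.
have -> : \sum_(pr | (pr != (a, b)) && (pr != (b, a)))
          ((tau pr.1 < tau pr.2) && (x (tau pr.2) < x (tau pr.1))) =
         \sum_(pr | (pr != (a, b)) && (pr != (b, a)))
          ((pr.1 < pr.2) && ((tau * x)%g pr.2 < (tau * x)%g pr.1)).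
  apply: eq_bigr => -[u v] /= /andP [N1 N2]; rewrite !permM; congr (_ && _).
  rewrite /tau !sgenE //.
  have N1' : ~ ((u : nat) = i /\ (v : nat) = i.+1).
    by move=> [E1 E2]; move/eqP: N1; apply; congr pair; apply/val_inj; rewrite /= ?E1 ?E2.
  have N2' : ~ ((u : nat) = i.+1 /\ (v : nat) = i).
    by move=> [E1 E2]; move/eqP: N2; apply; congr pair; apply/val_inj; rewrite /= ?E1 ?E2.
  by split_ifs; apply/idP/idP => ?; lia.
have -> : i.+1 < i = false by lia.
have -> : i < i.+1 by lia.
by rewrite /=; move: (x a < x b) (x b < x a) => [] []; lia.
Qed.

Definition descent {n} (x : 'S_n) i :=
  forall a b : 'I_n, a = i :> nat -> b = i.+1 :> nat -> x b < x a.

Lemma descentP n (x : 'S_n) i (a b : 'I_n) : a = i :> nat -> b = i.+1 :> nat ->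
  descent x i <-> x b < x a.
Proof.
move=> Ha Hb; split; first by move/(_ a b Ha Hb).
move=> H a' b' Ha' Hb'.
have -> : a' = a by apply/val_inj; rewrite /= Ha Ha'.
by have -> : b' = b by apply/val_inj; rewrite /= Hb Hb'.
Qed.

Section SgenInversions.
Variables (n i : nat) (x : 'S_n).
Hypothesis lt_i1n : i.+1 < n.

Let a := Ordinal (ltnW lt_i1n).
Let b := Ordinal lt_i1n.

Lemma inv_count_sgen_descent : descent x i -> inv_count (sgen n i.+1 * x)%g + 1 = inv_count x.
Proof.
move/(descentP x (a:=a) (b:=b) erefl erefl) => lt_ba.
have := inv_count_sgen_mul x (a:=a) (b:=b) lt_i1n erefl erefl.
by rewrite lt_ba (leq_gtF (ltnW lt_ba)) addn0.
Qed.

Lemma inv_count_sgen_ascent : ~ descent x i -> inv_count (sgen n i.+1 * x)%g = inv_count x + 1.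
Proof.
move=> nd; have ge_ab : ~~ (x b < x a).
  by apply/negP => /(descentP x (a:=a) (b:=b) erefl erefl).
have ne_ab : x a != x b by apply/negP => /eqP /perm_inj /(congr1 val) /=; lia.
have := inv_count_sgen_mul x (a:=a) (b:=b) lt_i1n erefl erefl.
by rewrite (negbTE ge_ab) ltn_neqAle ne_ab leqNgt ge_ab addn0.
Qed.

End SgenInversions.

Lemma inv_count_word_le n w : gen_word n w -> inv_count (perm_of_word n w) <= size w.
Proof.
elim: w => [|[|i] w IH] /=; first by rewrite perm_of_word_nil inv_count1.
  by [].
case/andP=> lt_i1n gw; rewrite perm_of_word_cons.
have := IH gw; have [d|nd] := pselect (descent (perm_of_word n w) i).
  by have := inv_count_sgen_descent lt_i1n d; lia.
by have := inv_count_sgen_ascent lt_i1n nd; lia.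
Qed.

Lemma increasing_perm_ge n (y : 'S_n) :
  {homo y : u v / u < v} -> forall c : 'I_n, c <= y c.
Proof.
move=> incr_y; suff: forall k (c : 'I_n), c = k :> nat -> k <= y c by move=> h c; exact: h.
elim=> [//|k IH] c Hc.
have Hk : k < n by move: (ltn_ord c); lia.
have := IH (Ordinal Hk) erefl.
have : y (Ordinal Hk) < y c by apply: incr_y => /=; lia.
lia.
Qed.

Lemma increasing_perm1 n (x : 'S_n) : {homo x : u v / u < v} -> x = 1%g.
Proof.
move=> incr_x.
have incr_xV : {homo (x^-1)%g : u v / u < v}.
  move=> u v uv; rewrite ltnNge; apply/negP; rewrite leq_eqVlt => /orP [/eqP E|h].
    by move/val_inj/(congr1 x): E; rewrite !permKV => E; rewrite E ltnn in uv.
  by have := incr_x _ _ h; rewrite !permKV; lia.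
apply/permP => c; apply/val_inj; rewrite perm1 /=.
have := increasing_perm_ge incr_x c; have := increasing_perm_ge incr_xV (x c).
by rewrite permK; lia.
Qed.

Lemma no_descent_perm1 n (x : 'S_n) : (forall i, i.+1 < n -> ~ descent x i) -> x = 1%g.
Proof.
move=> nd; apply: increasing_perm1.
have adj (c c' : 'I_n) : c' = c.+1 :> nat -> x c < x c'.
  move=> Hc; have Hn : (c : nat).+1 < n by rewrite -Hc.
  have ne : x c != x c' by apply/negP => /eqP /perm_inj /(congr1 val) /=; lia.
  rewrite ltn_neqAle ne leqNgt /=; apply/negP.
  by move/(descentP x (a:=c) (b:=c') erefl Hc); apply: nd.
suff incr d (u v : 'I_n) : v = u + d.+1 :> nat -> x u < x v.
  by move=> u v uv; apply: (incr (v - u).-1); lia.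
elim: d u v => [|d IH] u v Hv; first by apply: adj; rewrite Hv addn1.
have Hw : u + d.+1 < n by move: (ltn_ord v); rewrite Hv; lia.
by apply: (ltn_trans (IH u (Ordinal Hw) erefl)); apply: adj => /=; lia.
Qed.

Lemma exists_inv_count_word n (x : 'S_n) :
  exists w, [/\ gen_word n w, perm_of_word n w = x & size w = inv_count x].
Proof.
have [L] := ubnP (inv_count x); elim: L x => // L IH x ltxL.
have [[i [Hi d]]|nd] := pselect (exists i, i.+1 < n /\ descent x i); last first.
  suff -> : x = 1%g by exists [::]; rewrite perm_of_word_nil inv_count1.
  by apply: no_descent_perm1 => i Hi d; apply: nd; exists i.
have E := inv_count_sgen_descent Hi d.
have [w [gw pw sw]] := IH (sgen n i.+1 * x)%g ltac:(lia).
exists (i.+1 :: w); split => /=.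
- by rewrite gw andbT; lia.
- by rewrite perm_of_word_cons pw mulgA sgen2 // mul1g.
- by rewrite sw; lia.
Qed.

Lemma reduced_word_size n (s : 'S_n) w : reduced_word s w -> size w = inv_count s.
Proof.
move=> [gw pw minw]; have [w' [gw' pw' sw']] := exists_inv_count_word s.
by have := minw w' gw' pw'; have := inv_count_word_le gw; rewrite pw; lia.
Qed.

Definition inv_word {n} (s : 'S_n) w :=
  [/\ gen_word n w, perm_of_word n w = s & size w = inv_count s].

Lemma inv_word_cons n k (y : 'S_n) w : k.+1 < n -> descent y k ->
  inv_word (sgen n k.+1 * y)%g w -> inv_word y (k.+1 :: w).
Proof.
move=> Hk d [gw pw sw]; split => /=.
- by rewrite gw andbT; lia.
- by rewrite perm_of_word_cons pw mulgA sgen2 // mul1g.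
- by rewrite sw; have := inv_count_sgen_descent Hk d; lia.
Qed.

Lemma inv_word_cons_descent n k (s : 'S_n) w : inv_word s (k.+1 :: w) ->
  [/\ k.+1 < n, descent s k & inv_word (sgen n k.+1 * s)%g w].
Proof.
move=> [/= /andP [Hk gw] pw sw].
have pw1 : perm_of_word n w = (sgen n k.+1 * s)%g.
  by rewrite -pw perm_of_word_cons mulgA sgen2 // mul1g.
have le := inv_count_word_le gw; rewrite pw1 in le.
have [d|nd] := pselect (descent s k).
  by split => //; split => //; have := inv_count_sgen_descent Hk d; move: sw => /=; lia.
by have := inv_count_sgen_ascent Hk nd; move: sw => /=; lia.
Qed.

Lemma descent_sgen_far n i j (s : 'S_n) : i.+1 < n -> j.+1 < n -> (i.+1 < j) || (j.+1 < i) ->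
  descent s j -> descent (sgen n i.+1 * s)%g j.
Proof.
move=> Hi Hj Hij d a b Ha Hb.
have [_ _ ->] := sgen_mulE s (a:=Ordinal (ltnW Hi)) (b:=Ordinal Hi) Hi erefl erefl; try lia.
have [_ _ ->] := sgen_mulE s (a:=Ordinal (ltnW Hi)) (b:=Ordinal Hi) Hi erefl erefl; try lia.
exact: d.
Qed.

Lemma descent_sgen_adj n i (s : 'S_n) : i.+2 < n -> descent s i -> descent s i.+1 ->
  [/\ descent (sgen n i.+1 * s)%g i.+1, descent (sgen n i.+2 * (sgen n i.+1 * s))%g i,
      descent (sgen n i.+2 * s)%g i & descent (sgen n i.+1 * (sgen n i.+2 * s))%g i.+1].
Proof.
move=> H d1 d2.
have H1 : i < n by lia. have H2 : i.+1 < n by lia.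
pose A := Ordinal H1; pose B := Ordinal H2; pose C := Ordinal H.
have dAB := (descentP s (a:=A) (b:=B) erefl erefl).1 d1.
have dBC := (descentP s (a:=B) (b:=C) erefl erefl).1 d2.
have [e1 e2 e3] := sgen_mulE s (a:=A) (b:=B) H2 erefl erefl.
have [f1 f2 f3] := sgen_mulE s (a:=B) (b:=C) H erefl erefl.
have [g1 g2 g3] := sgen_mulE (sgen n i.+1 * s)%g (a:=B) (b:=C) H erefl erefl.
have [h1 h2 h3] := sgen_mulE (sgen n i.+2 * s)%g (a:=A) (b:=B) H2 erefl erefl.
split.
- apply/(descentP _ (a:=B) (b:=C) erefl erefl); rewrite e2 e3 //=; lia.
- apply/(descentP _ (a:=A) (b:=B) erefl erefl); rewrite g1 g3 //= ?e1 ?e2 ?e3 //=; lia.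
- apply/(descentP _ (a:=A) (b:=B) erefl erefl); rewrite f1 f3 //=; lia.
- apply/(descentP _ (a:=B) (b:=C) erefl erefl); rewrite h2 h3 //= ?f1 ?f2 ?f3 //=; lia.
Qed.

Lemma cong_cons (A : Type) (R : seq A -> seq A -> Prop) a u v :
  cong R u v -> cong R (a :: u) (a :: v).
Proof.
elim=> [l u' v' r H|u'|u' v' _ IH|u' v' w' _ IH1 _ IH2].
- exact: (cong_step (a :: l) r H).
- exact: cong_refl.
- exact: cong_sym.
- exact: cong_trans IH1 IH2.
Qed.

Section MatsumotoStep.
Variables (n : nat) (s : 'S_n).
Hypothesis IH : forall y : 'S_n, inv_count y < inv_count s ->
  forall w w', inv_word y w -> inv_word y w' -> cong (braid_rel n) w w'.

Lemma matsumoto_same k u u' : inv_word s (k.+1 :: u) -> inv_word s (k.+1 :: u') ->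
  cong (braid_rel n) (k.+1 :: u) (k.+1 :: u').
Proof.
move=> /inv_word_cons_descent [Hk dk ru] /inv_word_cons_descent [_ _ ru'].
apply: cong_cons; apply: IH ru ru'.
by have := inv_count_sgen_descent Hk dk; lia.
Qed.

(* Both words are congruent to [i.+1 :: j.+1 :: v] and [j.+1 :: i.+1 :: v]
   respectively, for a common reduced word v of s_(j+1) s_(i+1) s. *)
Lemma matsumoto_far i j u1 u2 : (i.+1 < j) || (j.+1 < i) ->
  inv_word s (i.+1 :: u1) -> inv_word s (j.+1 :: u2) ->
  cong (braid_rel n) (i.+1 :: u1) (j.+1 :: u2).
Proof.
move=> far rw1 rw2; have [Hi di _] := inv_word_cons_descent rw1; have [Hj dj _] := inv_word_cons_descent rw2.
have far' : (j.+1 < i) || (i.+1 < j) by rewrite orbC.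
have [v rv] := exists_inv_count_word (sgen n j.+1 * (sgen n i.+1 * s))%g.
have rv' : inv_word (sgen n i.+1 * (sgen n j.+1 * s))%g v.
  by rewrite mulgA sgen_comm // -mulgA.
have r1 := inv_word_cons Hi di (inv_word_cons Hj (descent_sgen_far Hi Hj far dj) rv).
have r2 := inv_word_cons Hj dj (inv_word_cons Hi (descent_sgen_far Hj Hi far' di) rv').
apply: cong_trans (matsumoto_same rw1 r1) (cong_trans _ (matsumoto_same r2 rw2)).
apply: (cong_step [::] v (u:=[:: i.+1; j.+1]) (v:=[:: j.+1; i.+1])).
by left; exists i.+1, j.+1; split => //; lia.
Qed.

Lemma matsumoto_adj i u1 u2 : inv_word s (i.+1 :: u1) -> inv_word s (i.+2 :: u2) ->
  cong (braid_rel n) (i.+1 :: u1) (i.+2 :: u2).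
Proof.
move=> rw1 rw2; have [Hi di _] := inv_word_cons_descent rw1; have [Hj dj _] := inv_word_cons_descent rw2.
have [e1 e2 e3 e4] := descent_sgen_adj Hj di dj.
have [v rv] := exists_inv_count_word (sgen n i.+1 * (sgen n i.+2 * (sgen n i.+1 * s)))%g.
have rv' : inv_word (sgen n i.+2 * (sgen n i.+1 * (sgen n i.+2 * s)))%g v.
  by rewrite !mulgA -sgen_braid // -!mulgA.
have r1 := inv_word_cons Hi di (inv_word_cons Hj e1 (inv_word_cons Hi e2 rv)).
have r2 := inv_word_cons Hj dj (inv_word_cons Hi e3 (inv_word_cons Hj e4 rv')).
apply: cong_trans (matsumoto_same rw1 r1) (cong_trans _ (matsumoto_same r2 rw2)).
apply: (cong_step [::] v (u:=[:: i.+1; i.+2; i.+1]) (v:=[:: i.+2; i.+1; i.+2])).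
by right; exists i.+1.
Qed.

End MatsumotoStep.

Theorem matsumoto n (s : 'S_n) w w' : inv_word s w -> inv_word s w' ->
  cong (braid_rel n) w w'.
Proof.
have [L] := ubnP (inv_count s); elim: L s w w' => // L IH s w w' ltsL rw rw'.
have {}IH (y : 'S_n) : inv_count y < inv_count s ->
    forall u u', inv_word y u -> inv_word y u' -> cong (braid_rel n) u u' by move=> lty u u'; apply: IH; lia.
case: w rw => [|[|i] w1] rw; case: w' rw' => [|[|j] w2] rw';
  try by [exact: cong_refl | case: rw | case: rw' | case: rw => _ _; case: rw' => _ _ /= <-].
wlog le_ij : i j w1 w2 rw rw' / i <= j.
  by move=> wl; case: (leqP i j) => [|/ltnW] ij; [|apply: cong_sym]; apply: wl.
have [eq_ij|ne_ij] := eqVneq i j; first by subst j; exact: (matsumoto_same IH rw rw').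
have [eq_ji|ne_ji] := eqVneq j i.+1; first by subst j; exact: (matsumoto_adj IH rw rw').
by apply: (matsumoto_far IH _ rw rw'); apply/orP; left; lia.
Qed.

Lemma perm_of_word_fix n M w : gen_word n w -> all (fun a => a <= M) w ->
  forall c : 'I_n, M < c -> perm_of_word n w c = c.
Proof.
elim: w => [|[|i] w IH] //=; first by move=> _ _ c _; rewrite perm_of_word_nil perm1.
move=> /andP [lt_i1n gw] /andP [iM wM] c Mc.
by rewrite perm_of_word_cons permM sgen_id //; try lia; apply: IH.
Qed.

(* Left multiplication by the cycle s_(j+1-d) ... s_j moves the value y j
   down past d smaller values, creating d new inversions. *)
Lemma inv_count_cycle_mul n d : forall j (y : 'S_n), j < n -> d <= j ->
  (forall c c' : 'I_n, c' = j :> nat -> c < j -> y c < y c') ->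
  inv_count (perm_of_word n (iota (j.+1 - d) d) * y)%g = inv_count y + d.
Proof.
elim: d => [|d IH] j y Hj Hd cond; first by rewrite perm_of_word_nil mul1g addn0.
case: j Hj Hd cond => [|i] Hj Hd cond; first lia.
have -> : iota (i.+2 - d.+1) d.+1 = iota (i.+1 - d) d ++ [:: i.+1].
  by rewrite -[d.+1]addn1 iotaD /=; congr (iota _ _ ++ [:: _]); lia.
rewrite perm_of_word_cat /perm_of_word big_seq1 -mulgA -/(perm_of_word n _).
have Hi : i < n by lia.
have nd : ~ descent y i.
  move/(descentP y (a:=Ordinal Hi) (b:=Ordinal Hj) erefl erefl).
  by have := cond (Ordinal Hi) (Ordinal Hj) erefl (ltnSn i); lia.
have [f1 f2 f3] := sgen_mulE y (a:=Ordinal Hi) (b:=Ordinal Hj) Hj erefl erefl.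
rewrite (IH i) ?inv_count_sgen_ascent //; try lia.
move=> c c' Hc' Hc; have -> : c' = Ordinal Hi by apply/val_inj.
by rewrite f1 f3; try lia; apply: cond => //=; lia.
Qed.

Definition bubble_seq (t : nat -> nat) m :=
  flatten [seq bubble_word k (t k) | k <- rev (iota 1 m)].

Lemma bubble_seq_inv_count n (t : nat -> nat) m :
  m <= n.-1 -> (forall k, 0 < k < n -> t k <= k) ->
  [/\ gen_word n (bubble_seq t m), all (fun a => a <= m) (bubble_seq t m)
    & inv_count (perm_of_word n (bubble_seq t m)) = size (bubble_seq t m)].
Proof.
move=> + ht; elim: m => [|m IH] Hm.
  by rewrite /bubble_seq /= perm_of_word_nil inv_count1.
have [g1 a1 i1] := IH (ltnW Hm).
have -> : bubble_seq t m.+1 = bubble_word m.+1 (t m.+1) ++ bubble_seq t m.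
  by rewrite /bubble_seq -[m.+1]addn1 iotaD rev_cat /= add1n addn1.
set x := perm_of_word n (bubble_seq t m).
have fx : forall c : 'I_n, m < c -> x c = c by apply: perm_of_word_fix g1 a1.
have htk := ht m.+1 ltac:(lia).
rewrite /bubble_word; case: (t m.+1 =P 0) => [_|tk0].
  by split => //=; apply: sub_all a1 => a /=; lia.
have gb : gen_word n (iota (t m.+1) (m.+1 - t m.+1).+1).
  by apply/allP => a; rewrite mem_iota; lia.
have ab : all (fun a => a <= m.+1) (iota (t m.+1) (m.+1 - t m.+1).+1).
  by apply/allP => a; rewrite mem_iota /=; lia.
split.
- by move: gb g1; rewrite /gen_word all_cat => -> ->.
- by rewrite all_cat ab /=; apply: sub_all a1 => a /=; lia.
rewrite perm_of_word_cat size_cat size_iota -i1.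
set d := (m.+1 - t m.+1).+1.
have -> : t m.+1 = m.+2 - d by rewrite /d; lia.
rewrite (inv_count_cycle_mul (j:=m.+1)) //; try lia.
move=> c c' Hc' Hc; have -> : x c' = c' by apply: fx; lia.
rewrite Hc'; case: (ltnP (x c) m.+1) => // h.
by move/perm_inj: (fx (x c) h) => E; move: Hc; rewrite -E; lia.
Qed.

Lemma bubble_decomp_inv_word n (s : 'S_n) t :
  bubble_decomp s t -> inv_word s (bubble_seq t n.-1).
Proof.
case=> ht _ ->; have [gw _ iw] := bubble_seq_inv_count (leqnn n.-1) ht.
by split.
Qed.

Lemma SigK : cancel Sig unsig. Proof. by []. Qed.

Lemma all_is_sig_map (l : seq nat) : all is_sig [seq Sig i | i <- l].
Proof. by elim: l. Qed.

Lemma map_unsigK (u : seq gvb_letter) : all is_sig u -> [seq Sig i | i <- map unsig u] = u.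
Proof. by elim: u => [|[i|i] u IH] //= /IH ->. Qed.

Lemma alpha_t_Q_factor_mul (K : fieldType) (t : nat -> nat) k (a : seq (K * seq gvb_letter)) :
  t k != 0 ->
  alpha_t (lc_mul (Q_factor K t k) a) =
  [seq (z.1, bubble_word k (t k) ++ z.2) | z <- alpha_t a].
Proof.
move=> tk.
rewrite /lc_mul /Q_factor /= /alpha_t !filter_cat !map_cat cats0.
rewrite [X in _ ++ X = _](_ : _ = [::]); last first.
  rewrite filter_map (eq_filter (a2 := pred0)) ?filter_pred0 // => y.
  by rewrite /= !all_cat /= andbF.
rewrite cats0 filter_map /= -map_comp.
rewrite (eq_filter (a2 := fun y => all is_sig y.2)); last first.
  by move=> y /=; rewrite all_cat all_is_sig_map.
rewrite -!map_comp; apply: eq_map => y /=.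
by rewrite mul1r map_cat (mapK SigK) /bubble_word (negbTE tk).
Qed.

Lemma alpha_t_Q_prod (K : fieldType) (t : nat -> nat) (l : seq nat) :
  alpha_t (foldr (@lc_mul K _) (lc_one K _) [seq Q_factor K t k | k <- l & t k != 0]) =
  [:: (1%R, flatten [seq bubble_word k (t k) | k <- l])].
Proof.
elim: l => [|k l IH] //=; case: ifP => tk /=; first by rewrite alpha_t_Q_factor_mul ?tk // IH.
by rewrite IH /bubble_word; move/negbFE: tk => ->.
Qed.

Lemma gvb_rel_sig n u v : gvb_rel n u v ->
  all is_sig u = all is_sig v /\ (all is_sig u -> braid_rel n (map unsig u) (map unsig v)).
Proof.
case=> [[i [j [Hi Hj Hij []]]] | [i [Hi Hi2 []]]] [-> ->] //=; split => // _.
- by left; exists i, j.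
- by right; exists i.
Qed.

Lemma cong_gvb_sig n u v : cong (gvb_rel n) u v ->
  all is_sig u = all is_sig v /\
  (all is_sig u -> cong (braid_rel n) (map unsig u) (map unsig v)).
Proof.
elim=> [l u' v' r H|u'|u' v' _ [IH1 IH2]|u' v' w' _ [IH1 IH2] _ [IH3 IH4]].
- have [E1 E2] := gvb_rel_sig H.
  rewrite !all_cat E1; split => // /and3P [_ au _].
  by rewrite !map_cat; apply: cong_step; apply: E2; rewrite E1.
- by split => // _; exact: cong_refl.
- by split => // au; apply: cong_sym; apply: IH2; rewrite IH1.
- split; first by rewrite IH1.
  by move=> au; apply: cong_trans (IH2 au) (IH4 _); rewrite -IH1.
Qed.

Lemma cong_braid_sig n u v : cong (braid_rel n) u v ->
  cong (gvb_rel n) [seq Sig i | i <- u] [seq Sig i | i <- v].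
Proof.
elim=> [l u' v' r H|u'|u' v' _ IH|u' v' w' _ IH1 _ IH2].
- rewrite !map_cat; apply: cong_step.
  case: H => [[i [j [Hi Hj Hij -> ->]]]|[i [Hi Hi2 -> ->]]].
    by left; exists i, j; split => //; apply: Or31.
  by right; exists i; split => //; apply: Or41.
- exact: cong_refl.
- exact: cong_sym.
- exact: cong_trans IH1 IH2.
Qed.

Lemma malg_coeff_alpha_t (K : fieldType) n (a : seq (K * seq gvb_letter)) w :
  malg_coeff (braid_rel n) (alpha_t a) w = malg_coeff (gvb_rel n) a [seq Sig i | i <- w].
Proof.
rewrite /malg_coeff /alpha_t big_map big_filter big_mkcond /=.
apply: eq_bigr => x _; case: ifP => sx.
  congr (if _ then _ else _); apply: asbool_equiv_eq; split.
    by move/cong_braid_sig; rewrite map_unsigK.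
  by move/cong_gvb_sig => [_ /(_ sx)]; rewrite (mapK SigK).
case: asboolP => // /cong_gvb_sig [E _].
by move: sx; rewrite E all_is_sig_map.
Qed.

Lemma malg_eq_alpha_t (K : fieldType) n (a b : seq (K * seq gvb_letter)) :
  malg_eq (gvb_rel n) a b -> malg_eq (braid_rel n) (alpha_t a) (alpha_t b).
Proof. by move=> eq_ab w; rewrite !malg_coeff_alpha_t eq_ab. Qed.

Lemma malg_eq_cong (K : fieldType) (A : Type) (R : seq A -> seq A -> Prop) (k : K) u v :
  cong R u v -> malg_eq R [:: (k, u)] [:: (k, v)].
Proof.
move=> cuv w; rewrite /malg_coeff !big_seq1 /=; congr (if _ then _ else _).
by apply: asbool_equiv_eq; split; apply: cong_trans; [apply: cong_sym|].
Qed.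

Lemma cong_braid_perm_of_word n u v :
  cong (braid_rel n) u v -> perm_of_word n u = perm_of_word n v.
Proof.
elim=> [l u' v' r H|u'|u' v' _ IH|u' v' w' _ IH1 _ IH2] //; last by rewrite IH1 IH2.
rewrite !perm_of_word_cat; congr (_ * (_ * _))%g.
rewrite /perm_of_word; case: H => [[i [j [Hi Hj Hij -> ->]]]|[i [Hi Hi2 -> ->]]].
  rewrite !big_cons !big_nil !mulg1.
  case: i j Hi Hj Hij => [|i] [|j] //= Hi Hj Hij; apply: sgen_comm; lia.
rewrite !big_cons !big_nil !mulg1 !mulgA.
by case: i Hi Hi2 => // i _; apply: sgen_braid.
Qed.

Section ClassSums.
Variables (K : fieldType) (A : Type) (R : seq A -> seq A -> Prop) (P : seq A -> bool).
Hypothesis congP : forall u v, cong R u v -> P u = P v.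

Definition in_class (r : seq A) (x : K * seq A) := `[< cong R x.2 r >].

Lemma malg_coeff_drop_class r (c : seq (K * seq A)) w :
  malg_coeff R [seq y <- c | ~~ in_class r y] w =
  if `[< cong R r w >] then 0%R else malg_coeff R c w.
Proof.
rewrite /malg_coeff big_filter; case: asboolP => rw.
  apply: big1 => x /asboolPn cx; case: asboolP => // xw; case: cx.
  exact: cong_trans xw (cong_sym rw).
rewrite big_mkcond; apply: eq_bigr => x _; rewrite /in_class.
case: asboolP => //= xr; case: asboolP => // xw; case: rw.
exact: cong_trans (cong_sym xr) xw.
Qed.

Lemma class_sum_split r (c : seq (K * seq A)) :
  (\sum_(x <- c | P x.2) x.1 = (if P r then malg_coeff R c r else 0) +
     \sum_(x <- [seq y <- c | ~~ in_class r y] | P x.2) x.1)%R.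
Proof.
rewrite (bigID (in_class r)) /= big_filter_cond; congr (_ + _)%R; last first.
  by apply: eq_bigl => x; rewrite andbC.
rewrite /malg_coeff; case: ifP => Pr.
  rewrite [in RHS]big_mkcond [in LHS]big_mkcond /=; apply: eq_bigr => x _.
  rewrite /in_class; case: asboolP => cx; last by rewrite andbF; case: (P x.2).
  by rewrite andbT (congP cx) Pr.
by apply: big1 => x /andP [px /asboolP cx]; move: px; rewrite (congP cx) Pr.
Qed.

(* Induction on the total length: splitting off the class of a word occurring
   in [a] or [b] removes at least one entry. *)
Lemma malg_eq_class_sum (a b : seq (K * seq A)) : malg_eq R a b ->
  (\sum_(x <- a | P x.2) x.1 = \sum_(x <- b | P x.2) x.1)%R.
Proof.
have [N] := ubnP (size a + size b); elim: N a b => // N IH a b ltN eq_ab.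
have drop_class r :
    size [seq y <- a | ~~ in_class r y] + size [seq y <- b | ~~ in_class r y] < N ->
    (\sum_(x <- a | P x.2) x.1 = \sum_(x <- b | P x.2) x.1)%R.
  move=> ltr; rewrite (class_sum_split r a) (class_sum_split r b) eq_ab; congr (_ + _)%R.
  by apply: IH ltr _ => w; rewrite !malg_coeff_drop_class eq_ab.
have size_drop r (c : seq (K * seq A)) : size [seq y <- c | ~~ in_class r y] <= size c.
  by rewrite size_filter count_size.
have self_class (x : K * seq A) : in_class x.2 x by apply/asboolP; exact: cong_refl.
case: a ltN eq_ab drop_class => [|x a'] ltN eq_ab drop_class.
  case: b ltN eq_ab drop_class => [//|y b'] ltN eq_ab drop_class.
  apply: (drop_class y.2); rewrite /= self_class /=.
  by have := size_drop y.2 b'; move: ltN => /=; lia.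
apply: (drop_class x.2); rewrite /= self_class /=.
by have := size_drop x.2 a'; have := size_drop x.2 b; move: ltN => /=; lia.
Qed.

End ClassSums.

Lemma beta_t_malg_eq (K : fieldType) n (b b' : seq (K * seq nat)) :
  malg_eq (braid_rel n) b b' -> beta_t n b = beta_t n b'.
Proof.
move=> eq_bb'; apply/ffunP => g; rewrite !ffunE.
apply: (malg_eq_class_sum (P := fun v => perm_of_word n v == g) _ eq_bb').
by move=> u v /cong_braid_perm_of_word ->.
Qed.

Lemma beta_t_word (K : fieldType) n w :
  beta_t n [:: (1%R, w)] = group_elt K (perm_of_word n w).
Proof.
by apply/ffunP => g; rewrite !ffunE big_cons big_nil /= eq_sym; case: (g == _); rewrite ?addr0.
Qed.

Unset Implicit Arguments. Set Strict Implicit.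

Theorem lemma4 (K : fieldType) (p q : nat) (s : 'S_(p + q)) (t : nat -> nat) :
  0 < p -> 0 < q -> shuffle s -> bubble_decomp s t ->
  forall w : seq nat, reduced_word s w ->
    (forall a, malg_eq (gvb_rel (p + q)) a (Qpq K (p + q) t) ->
       malg_eq (braid_rel (p + q)) (alpha_t a) [:: (1%R, w)])
    /\ (forall b, malg_eq (braid_rel (p + q)) b [:: (1%R, w)] ->
       beta_t (p + q) b = group_elt K s).
Proof.
move=> _ _ _ bs w rw.
have iw : inv_word s w by have [gw pw _] := rw; split => //; exact: reduced_word_size.
split=> [a eq_aQ | b eq_bw].
  move=> v; rewrite (malg_eq_alpha_t eq_aQ) /Qpq alpha_t_Q_prod.
  exact: malg_eq_cong (matsumoto (bubble_decomp_inv_word bs) iw) v.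
by case: rw => _ pw _; rewrite (beta_t_malg_eq eq_bw) beta_t_word pw.
Qed.
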